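(* Let $s\ge2$, $\eta>0$ and $z\in\mathbb{R}_{\ge0}^s$ with $\sum_j z_j>0$ not a constant vector. Let $\tilde z_k=\max\big(z_k-\eta\frac{\partial\mathcal{H}}{\partial z_k}(z),0\big)$ (with $\tilde z_k=0$ when $z_k=0$). Then $\tilde z$ is not a constant vector. Hence, iterating this update from a non-uniform initial vector, the masses never become uniform.
   Context: $\mathcal{H}(z)=-\sum_i \frac{z_i}{\sum_j z_j}\log\frac{z_i}{\sum_j z_j}$ with $0\log0=0$; for $z_k>0$ the gradient is the partial derivative, and for $z_k=0$ it is regarded as $+\infty$. *)

From HB Require Import structures.
From mathcomp Require Import all_boot all_order all_algebra.
From mathcomp Require Import all_classical all_reals all_analysis.
Set Implicit Arguments. Unset Strict Implicit. Unset Printing Implicit Defensive.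
Import Order.TTheory GRing.Theory Num.Theory.
Local Open Scope ring_scope.

Section Entropy.
Variables (R : realType) (s : nat).

Definition xlogx (x : R) : R := if x == 0 then 0 else x * ln x.

Definition entropyH (z : 'I_s -> R) : R :=
  - \sum_(i < s) xlogx (z i / \sum_(j < s) z j).

Definition shift_coord (z : 'I_s -> R) (k : 'I_s) (t : R) : 'I_s -> R :=
  fun i => if i == k then z i + t else z i.

(* partial derivative of H with respect to z_k at z (used only when z_k > 0) *)
Definition dH (z : 'I_s -> R) (k : 'I_s) : R :=
  derive1 (fun t => entropyH (shift_coord z k t)) 0.

(* one gradient-descent step with clipping at 0; when z_k = 0 the gradient
   is +oo, so the clipped update is 0 *)
Definition update (eta : R) (z : 'I_s -> R) : 'I_s -> R :=
  fun k => if z k == 0 then 0 else Num.max (z k - eta * dH z k) 0.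

Definition is_constant (z : 'I_s -> R) : Prop := exists c : R, forall i, z i = c.

End Entropy.

From HB Require Import structures.
From mathcomp Require Import all_boot all_order all_algebra.
From mathcomp Require Import all_classical all_reals all_analysis.
From mathcomp Require Import ring lra.
Set Implicit Arguments. Unset Strict Implicit. Unset Printing Implicit Defensive.
Import Order.TTheory GRing.Theory Num.Theory.
Local Open Scope ring_scope.

(* For [z k > 0] the partial derivative is
   [dH z k = (\sum_i z i * ln (z i) - S * ln (z k)) / S ^+ 2] with [S] the total
   mass, which decreases as [z k] grows.  At a largest coordinate [m] it is
   nonpositive, because [\sum_i z i * ln (z i) <= S * ln (z m)], so the step
   moves [z m] up and no clipping occurs there.  A strictly smaller coordinate
   starts lower and has a larger gradient (or is clipped to [0]), so it stays
   strictly below the new value at [m]: the maximum stays strict, and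
   non-constancy propagates along the iteration. *)

Section EntropyDerivative.
Variable R : realType.
Implicit Types a x : R.

Lemma is_derive_addl a x : is_derive x 1 (fun t => a + t) 1.
Proof.
by apply: is_derive_eq (is_deriveD (is_derive_cst a x 1) (is_derive_id x 1)) _; rewrite add0r.
Qed.

Lemma is_derive_addl_comp (f : R -> R) a df :
  is_derive a 1 f df -> is_derive (0 : R) 1 (fun t => f (a + t)) df.
Proof.
move=> fa; have := @is_derive1_comp R f (fun t => a + t) 0 df 1.
by rewrite addr0 mulr1; apply => //; exact: is_derive_addl.
Qed.

Lemma is_derive_xlnx x : 0 < x -> is_derive x 1 (fun y => y * ln y) (ln x + 1).
Proof.
move=> x0; apply: is_derive_eq (is_deriveM (is_derive_id x 1) (is_derive1_ln x0)) _.
by change (x * x^-1 + ln x * 1 = ln x + 1); rewrite mulr1 mulfV ?gt_eqF // addrC.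
Qed.

Lemma is_derive_entropy_line (S a C : R) : 0 < S -> 0 < a ->
  is_derive (0 : R) 1 (fun t => ln (S + t) - (C + (a + t) * ln (a + t)) / (S + t))
    ((C + a * ln a - S * ln a) / S ^+ 2).
Proof.
move=> S0 a0.
have dlnS := is_derive_addl_comp (is_derive1_ln S0).
have dxlnx := is_derive_addl_comp (is_derive_xlnx a0).
have dinvS : is_derive (0 : R) 1 (fun t => (S + t)^-1) (- S ^- 2).
  apply: is_derive_eq (is_deriveV _ (is_derive_addl S 0)) _; rewrite addr0.
    exact: lt0r_neq0.
  by change (- S ^- 2 * 1 = - S ^- 2); rewrite mulr1.
have := is_deriveB dlnS (is_deriveM (is_deriveD (is_derive_cst C (0 : R) 1) dxlnx) dinvS).
move=> /is_derive_eq; apply.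
change (S^-1 - ((C + (a + 0) * ln (a + 0)) * - S ^- 2 + (S + 0)^-1 * (0 + (ln a + 1))) =
  (C + a * ln a - S * ln a) / S ^+ 2).
by rewrite !addr0 add0r; field; exact: lt0r_neq0.
Qed.
End EntropyDerivative.

Section EntropyGradient.
Variables (R : realType) (s : nat).
Implicit Types (z : 'I_s -> R) (i j k m : 'I_s).

Lemma xlogxE (x : R) : xlogx x = x * ln x.
Proof. by rewrite /xlogx; case: eqP => [->|//]; rewrite mul0r. Qed.

Lemma xlogx_div (w T : R) : 0 <= w -> 0 < T ->
  xlogx (w / T) = (w * ln w - w * ln T) / T.
Proof.
move=> w_ge0 T_gt0; rewrite xlogxE.
have [->|w_neq0] := eqVneq w 0; first by rewrite !mul0r subrr mul0r.
have w_gt0 : 0 < w by rewrite lt_def w_neq0 w_ge0.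
by rewrite lnM ?posrE ?invr_gt0 // lnV ?posrE //; field; exact: lt0r_neq0.
Qed.

Lemma coord_le_sum z k : (forall i, 0 <= z i) -> z k <= \sum_(j < s) z j.
Proof. by move=> z_ge0; rewrite (bigD1 k) //= lerDl sumr_ge0. Qed.

Lemma sum_shift_coord z k t :
  \sum_(j < s) shift_coord z k t j = \sum_(j < s) z j + t.
Proof.
rewrite (bigD1 k) //= [in RHS](bigD1 k) //= /shift_coord eqxx addrAC.
by congr (_ + _ + _); apply: eq_bigr => i /negPf ->.
Qed.

Lemma entropyH_shift_coord z k t : (forall i, 0 <= z i) -> 0 < z k + t ->
  let S := \sum_(j < s) z j in
  entropyH (shift_coord z k t) =
  ln (S + t) -
  (\sum_(i < s | i != k) z i * ln (z i) + (z k + t) * ln (z k + t)) / (S + t).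
Proof.
move=> z_ge0 zkt_gt0 S.
have St_gt0 : 0 < S + t by have := coord_le_sum k z_ge0; rewrite -/S; lra.
have w_ge0 j : 0 <= shift_coord z k t j.
  by rewrite /shift_coord; case: eqP => [->|_]; [exact: ltW|].
rewrite /entropyH sum_shift_coord -/S.
under eq_bigr => j _ do rewrite xlogx_div //.
rewrite -mulr_suml sumrB -mulr_suml sum_shift_coord -/S.
rewrite (bigD1 k) //= {1 2}/shift_coord eqxx.
under eq_bigr => i /negPf do rewrite /shift_coord => ->.
by field; exact: lt0r_neq0.
Qed.

Lemma dHE z k : (forall i, 0 <= z i) -> 0 < z k ->
  let S := \sum_(j < s) z j in
  dH z k = (\sum_(i < s) z i * ln (z i) - S * ln (z k)) / S ^+ 2.
Proof.
move=> z_ge0 zk_gt0 S.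
have S_gt0 : 0 < S := lt_le_trans zk_gt0 (coord_le_sum k z_ge0).
set C := \sum_(i < s | i != k) z i * ln (z i).
have : is_derive (0 : R) 1 (fun t => entropyH (shift_coord z k t))
    ((C + z k * ln (z k) - S * ln (z k)) / S ^+ 2).
  apply: near_eq_is_derive (is_derive_entropy_line C S_gt0 zk_gt0); near=> t.
  have zkt : - z k < t by near: t; apply: lt_nbhsr; rewrite oppr_lt0.
  by rewrite entropyH_shift_coord // addrC -ltrBlDr sub0r.
by move=> dentropy; rewrite /dH derive1E derive_val [in RHS](bigD1 k) //= addrC.
Unshelve. all: by end_near.
Qed.

Lemma le_dH z i j : (forall i, 0 <= z i) -> 0 < z i -> z i <= z j ->
  dH z j <= dH z i.
Proof.
move=> z_ge0 zi_gt0 zij; have zj_gt0 := lt_le_trans zi_gt0 zij.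
rewrite !dHE //; apply: ler_wpM2r; first by rewrite invr_ge0 sqr_ge0.
by rewrite lerD2l lerN2 ler_wpM2l ?sumr_ge0 // ler_ln ?posrE.
Qed.

Lemma sum_xlnx_le_max z m : (forall i, 0 <= z i) -> (forall i, z i <= z m) ->
  \sum_(i < s) z i * ln (z i) <= (\sum_(i < s) z i) * ln (z m).
Proof.
move=> z_ge0 z_le_m; rewrite mulr_suml; apply: ler_sum => i _.
have [->|zi_neq0] := eqVneq (z i) 0; first by rewrite !mul0r.
have zi_gt0 : 0 < z i by rewrite lt_def zi_neq0 z_ge0.
by rewrite ler_wpM2l ?z_ge0 // ler_ln ?posrE // (lt_le_trans zi_gt0).
Qed.

Lemma dH_max_le0 z m : (forall i, 0 <= z i) -> 0 < z m -> (forall i, z i <= z m) ->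
  dH z m <= 0.
Proof.
move=> z_ge0 zm_gt0 z_le_m; rewrite dHE //.
by rewrite mulr_le0_ge0 ?invr_ge0 ?sqr_ge0 // subr_le0 sum_xlnx_le_max.
Qed.

Lemma nonconstant_argmax z : ~ is_constant z ->
  exists m i, (forall j, z j <= z m) /\ z i < z m.
Proof.
move=> nc; have [i0 _] : exists i : 'I_s, True.
  by apply: contrapT => no_i; apply: nc; exists 0 => i; case: no_i; exists i.
have [m _ z_le_m] := @arg_maxP _ _ 'I_s i0 xpredT z isT.
have {}z_le_m j : z j <= z m by exact: z_le_m.
exists m; apply: contrapT => no_i; apply: nc; exists (z m) => i.
apply/eqP; rewrite eq_le z_le_m /= leNgt; apply/negP => zi_lt.
by apply: no_i; exists i.
Qed.

Variable eta : R.
Hypothesis eta_ge0 : 0 <= eta.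

Lemma update_ge0 z i : 0 <= update eta z i.
Proof. by rewrite /update; case: eqP => // _; rewrite le_max lexx orbT. Qed.

Section AtMaximum.
Variables (z : 'I_s -> R) (m : 'I_s).
Hypotheses (z_ge0 : forall i, 0 <= z i) (zm_gt0 : 0 < z m)
  (z_le_m : forall i, z i <= z m).

Lemma ler_step_max : z m <= z m - eta * dH z m.
Proof. by rewrite lerDl oppr_ge0 mulr_ge0_le0 // dH_max_le0. Qed.

Lemma update_maxE : update eta z m = z m - eta * dH z m.
Proof.
by rewrite /update gt_eqF // max_l // (le_trans (ltW zm_gt0) ler_step_max).
Qed.

Lemma update_lt_max i : z i < z m -> update eta z i < update eta z m.
Proof.
move=> zi_lt; have um_gt0 := lt_le_trans zm_gt0 ler_step_max.
rewrite update_maxE /update; case: eqP => [//|zi_neq0].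
have zi_gt0 : 0 < z i by rewrite lt_def z_ge0 andbT; apply/eqP.
rewrite gt_max um_gt0 andbT ltr_leD // lerN2 ler_wpM2l //.
exact: le_dH (ltW zi_lt).
Qed.

End AtMaximum.

Lemma update_nonconstant z : (forall i, 0 <= z i) -> ~ is_constant z ->
  ~ is_constant (update eta z).
Proof.
move=> z_ge0 nc [c uc].
have [m [i [z_le_m zi_lt]]] := nonconstant_argmax nc.
have zm_gt0 := le_lt_trans (z_ge0 i) zi_lt.
by have := update_lt_max z_ge0 zm_gt0 z_le_m zi_lt; rewrite !uc ltxx.
Qed.

Lemma iter_update_nonconstant z : (forall i, 0 <= z i) -> ~ is_constant z ->
  forall n, ~ is_constant (iter n (update eta) z).
Proof.
move=> z_ge0 nc; elim => //= n; apply: update_nonconstant.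
by case: n => [|n] i //=; exact: update_ge0.
Qed.

End EntropyGradient.

Theorem corollary5 (R : realType) (s : nat) (eta : R) (z : 'I_s -> R) :
  (2 <= s)%N -> 0 < eta ->
  (forall i, 0 <= z i) -> 0 < \sum_(j < s) z j ->
  ~ is_constant z ->
  ~ is_constant (update eta z) /\
  (forall n : nat, ~ is_constant (iter n (update eta) z)).
Proof.
(* [2 <= s] and the positivity of the mass follow from non-constancy of a
   nonnegative vector. *)
move=> _ eta_gt0 z_ge0 _ nc.
have iter_nc := iter_update_nonconstant (ltW eta_gt0) z_ge0 nc.
by split; [exact: iter_nc 1%N|].
Qed.
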